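(* Let $1\le N\le3$, $a,c>0$, $1\le q<2$, $2+\frac8N<p<2^*$, and let $h\in L^{\frac{p}{p-q}}(\mathbb{R}^N)\cap C^1(\mathbb{R}^N)$ with $h\ge0$ and $\langle\nabla h,x\rangle\in L^{\frac{2}{2-q}}(\mathbb{R}^N)$. Assume $$\|h\|_{\frac{p}{p-q}}<\frac{aq(p\gamma_p-2)}{2\mathcal{C}_{N,p}^{q}\gamma_p(p-q)}\left(\frac{ap(2-q\gamma_p)}{2\gamma_p(p-q)\mathcal{C}_{N,p}^{p}}\right)^{\frac{2-q\gamma_p}{p\gamma_p-2}}c^{-\frac{(1-\gamma_p)(p-q)}{p\gamma_p-2}}.$$ Define $\varphi:(0,\infty)\to\mathbb{R}$ by $$\varphi(t):=\frac a2t^2-\frac1p\mathcal{C}_{N,p}^pc^{\frac{p-p\gamma_p}{2}}t^{p\gamma_p}-\frac1q\mathcal{C}_{N,p}^qc^{\frac{q(1-\gamma_p)}{2}}\|h\|_{\frac{p}{p-q}}t^{q\gamma_p}.$$ Then $\varphi$ has a local strict minimum at a negative level and a global strict maximum at a positive level. Moreover, there exist $0<R_1<R_2$, depending on $c$, such that $\varphi(R_1)=0=\varphi(R_2)$ and $\varphi(t)>0$ if and only if $t\in(R_1,R_2)$.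
   Context: $2^*=6$ if $N=3$, $2^*=+\infty$ if $N=1,2$. $\gamma_p:=\frac{N(p-2)}{2p}$, and $\mathcal{C}_{N,p}$ is the constant in the Gagliardo–Nirenberg inequality $\|u\|_p\le\mathcal{C}_{N,p}\|\nabla u\|_2^{\gamma_p}\|u\|_2^{1-\gamma_p}$ on $H^1(\mathbb{R}^N)$. *)

(* concrete reals R, real powers via Rpower (all bases used are > 0). *)
From Stdlib Require Import Reals.
Open Scope R_scope.

Definition gammap (N : nat) (p : R) : R := INR N * (p - 2) / (2 * p).

(* p < 2^*  where 2^* = 2N/(N-2) if N >= 3 and 2^* = +infinity if N = 1, 2 *)
Definition below_two_star (N : nat) (p : R) : Prop :=
  (3 <= N)%nat -> p < 2 * INR N / (INR N - 2).

(* The right-hand side of the smallness assumption on ||h||_{p/(p-q)};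
   C stands for the Gagliardo--Nirenberg constant C_{N,p}. *)
Definition h_bound (N : nat) (a c p q C : R) : R :=
  let g := gammap N p in
  a * q * (p * g - 2) / (2 * Rpower C q * g * (p - q))
  * Rpower (a * p * (2 - q * g) / (2 * g * (p - q) * Rpower C p))
           ((2 - q * g) / (p * g - 2))
  * Rpower c (- ((1 - g) * (p - q) / (p * g - 2))).

(* phi(t) = a/2 t^2 - 1/p C^p c^{(p - p g)/2} t^{p g}
            - 1/q C^q c^{q(1-g)/2} ||h|| t^{q g},  with H = ||h||_{p/(p-q)} *)
Definition phi (N : nat) (a c p q C H : R) (t : R) : R :=
  let g := gammap N p in
  a / 2 * t ^ 2
  - / p * Rpower C p * Rpower c ((p - p * g) / 2) * Rpower t (p * g)
  - / q * Rpower C q * Rpower c (q * (1 - g) / 2) * H * Rpower t (q * g).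

(* Write g = gamma_p.  For t > 0, phi(t) = t^(q g) G(t) with
   G(t) = (a/2) t^(2 - q g) - B t^(p g - q g) - D, where 0 < 2 - q g < p g - q g.  Such a G
   increases up to a single critical point m and then decreases, and G(m) is a positive
   multiple of h_bound - ||h||; so the smallness assumption gives G exactly two zeros
   R1 < m < R2, which are the zeros of phi.  Likewise phi'(t) = t^(q g - 1) G~(t) with G~ of
   the same shape, and G~(R1) = R1 G'(R1) > 0, so G~ has two zeros w1 < R1 < w2: phi
   decreases, increases, then decreases, with a local minimum at w1 (where phi < 0 because
   w1 < R1) and a global maximum at w2. *)

From Stdlib Require Import Reals Lra Lia.
Open Scope R_scope.

Lemma Rpower_pos x y : 0 < Rpower x y.
Proof. apply exp_pos. Qed.

Lemma Rpower_Rinv_pow x e : 0 < x -> e <> 0 -> Rpower (Rpower x (/ e)) e = x.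
Proof. intros Hx He. rewrite Rpower_mult, Rinv_l by exact He. now apply Rpower_1. Qed.

Lemma increasing_of_derive_pos f f' x y : x < y ->
  (forall t, x <= t <= y -> derivable_pt_lim f t (f' t)) ->
  (forall t, x < t < y -> 0 < f' t) -> f x < f y.
Proof.
  intros Hxy Hd Hpos. destruct (MVT_cor2 f f' x y Hxy Hd) as [t [E Ht]].
  specialize (Hpos t Ht). nra.
Qed.

Lemma decreasing_of_derive_neg f f' x y : x < y ->
  (forall t, x <= t <= y -> derivable_pt_lim f t (f' t)) ->
  (forall t, x < t < y -> f' t < 0) -> f y < f x.
Proof.
  intros Hxy Hd Hneg. destruct (MVT_cor2 f f' x y Hxy Hd) as [t [E Ht]].
  specialize (Hneg t Ht). nra.
Qed.

Section Unimodal.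

Variables (f : R -> R) (m : R).
Hypothesis f_cont : forall t, 0 < t -> continuity_pt f t.
Hypothesis f_incr : forall x y, 0 < x -> x < y -> y <= m -> f x < f y.
Hypothesis f_decr : forall x y, m <= x -> x < y -> f y < f x.

Lemma unimodal_max_pos : (exists t, 0 < t /\ 0 < f t) -> 0 < f m.
Proof.
  intros [t [Ht Hft]]. destruct (Rtotal_order t m) as [Hlt|[<-|Hgt]].
  - specialize (f_incr t m Ht Hlt (Rle_refl m)). lra.
  - exact Hft.
  - specialize (f_decr m t (Rle_refl m) Hgt). lra.
Qed.

Lemma unimodal_two_zeros x0 x1 : 0 < x0 < m -> m < x1 -> f x0 < 0 -> f x1 < 0 ->
  0 < f m ->
  exists z1 z2, x0 < z1 < m /\ m < z2 /\ f z1 = 0 /\ f z2 = 0 /\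
    forall t, 0 < t -> (0 < f t <-> z1 < t < z2) /\ (f t < 0 <-> t < z1 \/ z2 < t).
Proof.
  intros Hx0 Hx1 Hf0 Hf1 Hfm.
  destruct (Ranalysis5.IVT_interv f x0 m) as [z1 [Hz1 Ez1]]; try lra.
  { intros t Ht. apply f_cont; lra. }
  destruct (Ranalysis5.IVT_interv (fun t => - f t) m x1) as [z2 [Hz2 Ez2]]; try lra.
  { intros t Ht. apply continuity_pt_opp, f_cont; lra. }
  assert (z1 <> x0 /\ z1 <> m) as [? ?] by (split; intros ->; lra).
  assert (z2 <> m /\ z2 <> x1) as [? ?] by (split; intros ->; lra).
  exists z1, z2. do 4 (split; [lra|]). intros t Ht.
  destruct (Rtotal_order t z1) as [T1|[->|T1]]; [ | lra | ].
  { assert (f t < f z1) by (apply f_incr; lra). lra. }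
  destruct (Rle_or_lt t m) as [T2|T2].
  { assert (f z1 < f t) by (apply f_incr; lra). lra. }
  destruct (Rtotal_order t z2) as [T3|[->|T3]]; [ | lra | ].
  - assert (f z2 < f t) by (apply f_decr; lra). lra.
  - assert (f t < f z2) by (apply f_decr; lra). lra.
Qed.

End Unimodal.

Definition hump (K0 K1 K2 e1 e2 t : R) : R :=
  K1 * Rpower t e1 - K2 * Rpower t e2 - K0.

Definition hump_peak (K1 K2 e1 e2 : R) : R :=
  Rpower (K1 * e1 / (K2 * e2)) (/ (e2 - e1)).

Section Hump.

Variables K0 K1 K2 e1 e2 : R.
Hypotheses (K1_pos : 0 < K1) (K2_pos : 0 < K2) (e1_pos : 0 < e1) (e1_lt_e2 : e1 < e2).

Local Notation g := (hump K0 K1 K2 e1 e2).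
Local Notation m := (hump_peak K1 K2 e1 e2).

Lemma derivable_pt_lim_hump t : 0 < t ->
  derivable_pt_lim g t (Rpower t (e1 - 1) * (K1 * e1 - K2 * e2 * Rpower t (e2 - e1))).
Proof.
  intros Ht.
  replace (Rpower t (e1 - 1) * (K1 * e1 - K2 * e2 * Rpower t (e2 - e1)))
    with (K1 * (e1 * Rpower t (e1 - 1)) - K2 * (e2 * Rpower t (e2 - 1)) - 0).
  2: { replace (e2 - 1) with (e1 - 1 + (e2 - e1)) by ring. rewrite Rpower_plus. ring. }
  apply derivable_pt_lim_minus; [apply derivable_pt_lim_minus|apply derivable_pt_lim_const];
    apply derivable_pt_lim_scal; now apply derivable_pt_lim_power.
Qed.

Lemma hump_continuous t : 0 < t -> continuity_pt g t.
Proof.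
  intros Ht. apply derivable_continuous_pt. eexists. now apply derivable_pt_lim_hump.
Qed.

Lemma hump_peak_pos : 0 < m.
Proof. apply Rpower_pos. Qed.

Lemma hump_peak_pow : Rpower m (e2 - e1) = K1 * e1 / (K2 * e2).
Proof. apply Rpower_Rinv_pow; [apply Rdiv_lt_0_compat; nra | lra]. Qed.

Lemma hump_slope_pos t : 0 < t < m -> K2 * e2 * Rpower t (e2 - e1) < K1 * e1.
Proof.
  intros Ht.
  assert (Hcmp : K2 * e2 * Rpower t (e2 - e1) < K2 * e2 * Rpower m (e2 - e1))
    by (apply Rmult_lt_compat_l; [nra | apply Rlt_Rpower_l; lra]).
  rewrite hump_peak_pow in Hcmp. field_simplify in Hcmp; lra.
Qed.

Lemma hump_slope_neg t : m < t -> K1 * e1 < K2 * e2 * Rpower t (e2 - e1).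
Proof.
  intros Ht. pose proof hump_peak_pos.
  assert (Hcmp : K2 * e2 * Rpower m (e2 - e1) < K2 * e2 * Rpower t (e2 - e1))
    by (apply Rmult_lt_compat_l; [nra | apply Rlt_Rpower_l; lra]).
  rewrite hump_peak_pow in Hcmp. field_simplify in Hcmp; lra.
Qed.

Lemma hump_increasing x y : 0 < x -> x < y -> y <= m -> g x < g y.
Proof.
  intros Hx Hxy Hy. eapply increasing_of_derive_pos; [exact Hxy | |].
  - intros t Ht. apply derivable_pt_lim_hump; lra.
  - intros t Ht. pose proof (Rpower_pos t (e1 - 1)).
    pose proof (hump_slope_pos t ltac:(lra)). nra.
Qed.

Lemma hump_decreasing x y : m <= x -> x < y -> g y < g x.
Proof.
  intros Hx Hxy. pose proof hump_peak_pos.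
  eapply decreasing_of_derive_neg; [exact Hxy | |].
  - intros t Ht. apply derivable_pt_lim_hump; lra.
  - intros t Ht. pose proof (Rpower_pos t (e1 - 1)).
    pose proof (hump_slope_neg t ltac:(lra)). nra.
Qed.

Lemma hump_at_peak :
  g m = K1 * (e2 - e1) / e2 * Rpower (K1 * e1 / (K2 * e2)) (e1 / (e2 - e1)) - K0.
Proof.
  unfold hump. replace (Rpower m e2) with (Rpower m e1 * Rpower m (e2 - e1))
    by (rewrite <- Rpower_plus; f_equal; ring).
  rewrite hump_peak_pow. unfold hump_peak. rewrite Rpower_mult.
  replace (/ (e2 - e1) * e1) with (e1 / (e2 - e1)) by (field; lra).
  field. lra.
Qed.

(* (t^b g)' = t^(b-1) * hump (b K0) ((e1 + b) K1) ((e2 + b) K2) e1 e2, so at a zero z of g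
   this hump equals z g'(z). *)
Lemma hump_weighted_pos_at_zero b z : 0 < z < m -> g z = 0 ->
  0 < hump (b * K0) ((e1 + b) * K1) ((e2 + b) * K2) e1 e2 z.
Proof.
  unfold hump. intros Hz Hgz.
  pose proof (hump_slope_pos z Hz). pose proof (Rpower_pos z e1).
  replace (Rpower z e2) with (Rpower z e1 * Rpower z (e2 - e1)) in *
    by (rewrite <- Rpower_plus; f_equal; ring).
  nra.
Qed.

Hypothesis K0_pos : 0 < K0.

Lemma hump_neg_near_0 : exists x0, 0 < x0 < m /\ g x0 < 0.
Proof.
  pose proof hump_peak_pos as Hm.
  set (r := Rpower (K0 / K1) (/ e1)).
  assert (Hr : 0 < r) by apply Rpower_pos.
  assert (Er : Rpower r e1 = K0 / K1)
    by (apply Rpower_Rinv_pow; [apply Rdiv_lt_0_compat|]; lra).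
  exists (Rmin r (m / 2)). split; [unfold Rmin; destruct Rle_dec; lra|].
  assert (Hpow : Rpower (Rmin r (m / 2)) e1 <= K0 / K1).
  { rewrite <- Er. apply Rle_Rpower_l; [lra|]. unfold Rmin; destruct Rle_dec; lra. }
  pose proof (Rpower_pos (Rmin r (m / 2)) e2).
  unfold hump. apply (Rmult_le_compat_l K1) in Hpow; [|lra].
  replace (K1 * (K0 / K1)) with K0 in Hpow by (field; lra). nra.
Qed.

Lemma hump_neg_at_infinity : exists x1, m < x1 /\ g x1 < 0.
Proof.
  pose proof hump_peak_pos as Hm.
  set (r := Rpower (K1 / K2) (/ (e2 - e1))).
  assert (Hr : 0 < r) by apply Rpower_pos.
  assert (Er : Rpower r (e2 - e1) = K1 / K2)
    by (apply Rpower_Rinv_pow; [apply Rdiv_lt_0_compat|]; lra).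
  exists (m + r). split; [lra|].
  assert (HK : K2 * Rpower r (e2 - e1) < K2 * Rpower (m + r) (e2 - e1))
    by (apply Rmult_lt_compat_l; [lra | apply Rlt_Rpower_l; lra]).
  rewrite Er in HK. field_simplify in HK; [|lra].
  unfold hump.
  replace (Rpower (m + r) e2) with (Rpower (m + r) e1 * Rpower (m + r) (e2 - e1))
    by (rewrite <- Rpower_plus; f_equal; ring).
  pose proof (Rpower_pos (m + r) e1). nra.
Qed.

Theorem hump_two_zeros : (exists t, 0 < t /\ 0 < g t) ->
  exists z1 z2, 0 < z1 < m /\ m < z2 /\ g z1 = 0 /\ g z2 = 0 /\
    forall t, 0 < t -> (0 < g t <-> z1 < t < z2) /\ (g t < 0 <-> t < z1 \/ z2 < t).
Proof.
  intros Hpos.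
  destruct hump_neg_near_0 as [x0 [Hx0 Hg0]].
  destruct hump_neg_at_infinity as [x1 [Hx1 Hg1]].
  destruct (unimodal_two_zeros g m hump_continuous hump_increasing hump_decreasing x0 x1)
    as [z1 [z2 [Hz1 Hz]]]; auto.
  - exact (unimodal_max_pos g m hump_increasing hump_decreasing Hpos).
  - exists z1, z2. split; [lra | exact Hz].
Qed.

End Hump.

Section DownUpDown.

Variables (f : R -> R) (w1 w2 : R).
Hypothesis f_decr_left : forall x y, 0 < x -> x < y -> y <= w1 -> f y < f x.
Hypothesis f_incr : forall x y, w1 <= x -> x < y -> y <= w2 -> f x < f y.
Hypothesis f_decr_right : forall x y, w2 <= x -> x < y -> f y < f x.

Lemma down_up_down_local_min t : 0 < t -> t <> w1 -> Rabs (t - w1) < w2 - w1 ->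
  f w1 < f t.
Proof.
  intros Ht Htw Hd. apply Rabs_def2 in Hd.
  destruct (Rtotal_order t w1) as [T|[T|T]]; [ | contradiction | ].
  - apply f_decr_left; lra.
  - apply f_incr; lra.
Qed.

Lemma down_up_down_max_right t : w1 < t -> t <> w2 -> f t < f w2.
Proof.
  intros Ht Htw. destruct (Rtotal_order t w2) as [T|[T|T]]; [ | contradiction | ].
  - apply f_incr; lra.
  - apply f_decr_right; lra.
Qed.

End DownUpDown.

Definition min_max_profile (f : R -> R) : Prop :=
  (exists t0, 0 < t0 /\ f t0 < 0 /\
     exists d, 0 < d /\ forall t, 0 < t -> t <> t0 -> Rabs (t - t0) < d -> f t0 < f t) /\
  (exists t1, 0 < t1 /\ 0 < f t1 /\ forall t, 0 < t -> t <> t1 -> f t < f t1) /\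
  (exists R1 R2, 0 < R1 < R2 /\ f R1 = 0 /\ f R2 = 0 /\
     forall t, 0 < t -> (0 < f t <-> R1 < t < R2)).

Definition power_trinomial (A B D al be t : R) : R :=
  A * t ^ 2 - B * Rpower t al - D * Rpower t be.

Section Trinomial.

Variables A B D al be : R.
Hypotheses (A_pos : 0 < A) (B_pos : 0 < B) (D_pos : 0 < D).
Hypotheses (be_pos : 0 < be) (be_lt_2 : be < 2) (al_gt_2 : 2 < al).

Local Notation f := (power_trinomial A B D al be).
Local Notation g := (hump D A B (2 - be) (al - be)).
Local Notation df := (hump (be * D) (2 * A) (al * B) (2 - be) (al - be)).

Lemma power_trinomial_eq_hump t : 0 < t -> f t = Rpower t be * g t.
Proof.
  intros Ht. unfold power_trinomial, hump.
  rewrite <- (Rpower_pow 2 t Ht).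
  replace (INR 2) with (be + (2 - be)) by (simpl; ring).
  replace al with (be + (al - be)) at 1 by ring.
  rewrite !Rpower_plus. ring.
Qed.

Lemma derivable_pt_lim_power_trinomial t : 0 < t ->
  derivable_pt_lim f t (Rpower t (be - 1) * df t).
Proof.
  intros Ht.
  replace (Rpower t (be - 1) * df t)
    with (A * (INR 2 * t ^ (2 - 1)) - B * (al * Rpower t (al - 1))
          - D * (be * Rpower t (be - 1))).
  2: { unfold hump. rewrite <- (Rpower_pow (2 - 1) t Ht).
       replace (INR (2 - 1)) with (be - 1 + (2 - be)) by (simpl; ring).
       replace (al - 1) with (be - 1 + (al - be)) by ring.
       rewrite !Rpower_plus. simpl. ring. }
  apply derivable_pt_lim_minus; [apply derivable_pt_lim_minus|];
    apply derivable_pt_lim_scal.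
  - apply derivable_pt_lim_pow.
  - now apply derivable_pt_lim_power.
  - now apply derivable_pt_lim_power.
Qed.

Lemma power_trinomial_increasing x y : 0 < x -> x < y ->
  (forall t, x < t < y -> 0 < df t) -> f x < f y.
Proof.
  intros Hx Hxy Hdf. eapply increasing_of_derive_pos; [exact Hxy | |].
  - intros t Ht. apply derivable_pt_lim_power_trinomial; lra.
  - intros t Ht. apply Rmult_lt_0_compat; [apply Rpower_pos | auto].
Qed.

Lemma power_trinomial_decreasing x y : 0 < x -> x < y ->
  (forall t, x < t < y -> df t < 0) -> f y < f x.
Proof.
  intros Hx Hxy Hdf. eapply decreasing_of_derive_neg; [exact Hxy | |].
  - intros t Ht. apply derivable_pt_lim_power_trinomial; lra.
  - intros t Ht. pose proof (Rpower_pos t (be - 1)). pose proof (Hdf t Ht). nra.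
Qed.

Theorem power_trinomial_min_max_profile : (exists t, 0 < t /\ 0 < g t) -> min_max_profile f.
Proof.
  intros Hg.
  destruct (hump_two_zeros D A B (2 - be) (al - be) A_pos B_pos ltac:(lra) ltac:(lra) D_pos Hg)
    as [R1 [R2 [HR1 [HR2 [ZR1 [ZR2 Hg_sign]]]]]].
  assert (Hf_sign : forall t, 0 < t ->
    (0 < f t <-> R1 < t < R2) /\ (f t < 0 <-> t < R1 \/ R2 < t)).
  { intros t Ht. rewrite power_trinomial_eq_hump by exact Ht.
    pose proof (Rpower_pos t be). destruct (Hg_sign t Ht) as [[P1 P2] [N1 N2]].
    split; split; intros; [apply P1 | | apply N1 | ]; nra. }
  assert (HdfR1 : 0 < df R1).
  { pose proof (hump_weighted_pos_at_zero D A B (2 - be) (al - be) A_pos B_pos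
      ltac:(lra) ltac:(lra) be R1 HR1 ZR1) as Hw.
    replace (2 - be + be) with 2 in Hw by ring. replace (al - be + be) with al in Hw by ring.
    exact Hw. }
  destruct (hump_two_zeros (be * D) (2 * A) (al * B) (2 - be) (al - be)
      ltac:(lra) ltac:(nra) ltac:(lra) ltac:(lra) ltac:(nra))
    as [w1 [w2 [Hw1 [Hw2 [_ [_ Hdf_sign]]]]]]; [exists R1; split; [lra | exact HdfR1] |].
  assert (Hw1R1 : w1 < R1 < w2) by (apply (Hdf_sign R1); lra).
  assert (Hdec_left : forall x y, 0 < x -> x < y -> y <= w1 -> f y < f x).
  { intros x y Hx Hxy Hy. apply power_trinomial_decreasing; auto.
    intros t Ht. apply (Hdf_sign t ltac:(lra)). lra. }
  assert (Hinc : forall x y, w1 <= x -> x < y -> y <= w2 -> f x < f y).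
  { intros x y Hx Hxy Hy. apply power_trinomial_increasing; auto; [lra|].
    intros t Ht. apply (Hdf_sign t ltac:(lra)). lra. }
  assert (Hdec_right : forall x y, w2 <= x -> x < y -> f y < f x).
  { intros x y Hx Hxy. apply power_trinomial_decreasing; auto; [lra|].
    intros t Ht. apply (Hdf_sign t ltac:(lra)). lra. }
  assert (Hmax : forall t, w1 < t -> t <> w2 -> f t < f w2)
    by exact (down_up_down_max_right f w1 w2 Hinc Hdec_right).
  assert (Hfw2 : 0 < f w2).
  { set (u := (R1 + R2) / 2). assert (0 < f u) by (apply Hf_sign; unfold u; lra).
    destruct (Req_dec u w2) as [<-|Hu]; [assumption|].
    specialize (Hmax u ltac:(unfold u; lra) Hu). lra. }
  split; [|split].
  - exists w1. split; [lra|]. split; [apply Hf_sign; lra|].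
    exists (w2 - w1). split; [lra|].
    exact (down_up_down_local_min f w1 w2 Hdec_left Hinc).
  - exists w2. split; [lra|]. split; [exact Hfw2|]. intros t Ht Htw.
    destruct (Rle_or_lt t w1) as [T|T]; [|now apply Hmax].
    assert (f t < 0) by (apply Hf_sign; lra). lra.
  - exists R1, R2. split; [lra|].
    rewrite !power_trinomial_eq_hump, ZR1, ZR2 by lra.
    split; [ring | split; [ring|]]. intros t Ht. apply Hf_sign, Ht.
Qed.

End Trinomial.

Lemma gammap_bounds N p : (1 <= N <= 3)%nat -> 2 + 8 / INR N < p -> below_two_star N p ->
  0 < gammap N p < 1 /\ 2 < p * gammap N p.
Proof.
  intros HN Hp Hst.
  assert (HN0 : 0 < INR N) by (apply lt_0_INR; lia).
  assert (H8 : 2 * INR N + 8 < p * INR N).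
  { apply (Rmult_lt_compat_r (INR N)) in Hp; [|lra].
    replace ((2 + 8 / INR N) * INR N) with (2 * INR N + 8) in Hp by (field; lra). lra. }
  assert (Hp2 : 2 < p) by nra.
  assert (Hsub : INR N * (p - 2) < 2 * p).
  { destruct (Nat.le_gt_cases 3 N) as [H3|H2].
    - assert (N = 3%nat) as -> by lia. specialize (Hst H3).
      replace (2 * INR 3 / (INR 3 - 2)) with 6 in Hst by (simpl; field). simpl; lra.
    - assert (INR N <= 2) by (replace 2 with (INR 2) by reflexivity; apply le_INR; lia). nra. }
  assert (Hg : gammap N p * (2 * p) = INR N * (p - 2)) by (unfold gammap; field; lra).
  split; [split|]; nra.
Qed.

Lemma hump_at_peak_h_bound N a c p q C H :
  let g := gammap N p in
  let A := a / 2 in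
  let B := / p * Rpower C p * Rpower c ((p - p * g) / 2) in
  let D := / q * Rpower C q * Rpower c (q * (1 - g) / 2) * H in
  0 < a -> 0 < C -> 1 <= q -> 0 < g -> q * g < 2 -> 2 < p * g ->
  hump D A B (2 - q * g) (p * g - q * g) (hump_peak A B (2 - q * g) (p * g - q * g))
  = / q * Rpower C q * Rpower c (q * (1 - g) / 2) * (h_bound N a c p q C - H).
Proof.
  intros g A B D Ha HC Hq Hg Hqg Hpg.
  assert (Hpq : q < p) by nra.
  assert (HpC : 0 < Rpower C p) by apply Rpower_pos.
  assert (HA : 0 < A) by (unfold A; lra).
  assert (HB : 0 < B).
  { pose proof (Rpower_pos c ((p - p * g) / 2)). pose proof (Rinv_0_lt_compat p ltac:(lra)).
    unfold B. apply Rmult_lt_0_compat; [apply Rmult_lt_0_compat|]; assumption. }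
  rewrite hump_at_peak by lra.
  set (r := (p - p * g) / 2). set (k := (2 - q * g) / (p * g - 2)).
  set (hb := a * p * (2 - q * g) / (2 * g * (p - q) * Rpower C p)).
  assert (Hhb : 0 < hb).
  { assert (0 < a * p) by nra. assert (0 < 2 * g * (p - q)) by nra.
    unfold hb. apply Rdiv_lt_0_compat; nra. }
  replace (A * (2 - q * g) / (B * (p * g - q * g))) with (hb * Rpower c (- r)).
  2: { rewrite Rpower_Ropp. unfold A, B, hb. fold r. field.
       pose proof (Rpower_pos c r). repeat split; nra. }
  replace ((2 - q * g) / (p * g - q * g - (2 - q * g))) with k by (unfold k; field; lra).
  rewrite <- Rpower_mult_distr, Rpower_mult by (assumption || apply Rpower_pos).
  unfold h_bound; cbv zeta; fold g hb k.
  replace (- ((1 - g) * (p - q) / (p * g - 2))) with (- (r * k) + - (q * (1 - g) / 2))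
    by (unfold r, k; field; lra).
  rewrite Rpower_plus, (Rpower_Ropp c (q * (1 - g) / 2)).
  replace (- r * k) with (- (r * k)) by ring.
  unfold A, D. field.
  pose proof (Rpower_pos C q). pose proof (Rpower_pos c (q * (1 - g) / 2)).
  repeat split; nra.
Qed.

Theorem lemma3p4 (N : nat) (a c p q C H : R) :
  (1 <= N <= 3)%nat ->
  0 < a -> 0 < c ->
  1 <= q < 2 ->
  2 + 8 / INR N < p -> below_two_star N p ->
  0 < C ->
  0 < H ->
  H < h_bound N a c p q C ->
  (* local strict minimum at a negative level *)
  (exists t0, 0 < t0 /\ phi N a c p q C H t0 < 0 /\
     exists d, 0 < d /\ forall t, 0 < t -> t <> t0 -> Rabs (t - t0) < d ->
       phi N a c p q C H t0 < phi N a c p q C H t) /\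
  (* global strict maximum at a positive level *)
  (exists t1, 0 < t1 /\ 0 < phi N a c p q C H t1 /\
     forall t, 0 < t -> t <> t1 -> phi N a c p q C H t < phi N a c p q C H t1) /\
  (* zeros R1 < R2 and positivity set *)
  (exists R1 R2, 0 < R1 < R2 /\
     phi N a c p q C H R1 = 0 /\ phi N a c p q C H R2 = 0 /\
     forall t, 0 < t -> (0 < phi N a c p q C H t <-> R1 < t < R2)).
Proof.
  intros HN Ha Hc Hq Hp Hst HC HH Hsmall.
  destruct (gammap_bounds N p HN Hp Hst) as [[Hg0 Hg1] Hpg].
  pose proof (hump_at_peak_h_bound N a c p q C H Ha HC (proj1 Hq) Hg0 ltac:(nra) Hpg)
    as Hpeak.
  set (g := gammap N p) in *.
  set (B := / p * Rpower C p * Rpower c ((p - p * g) / 2)) in *.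
  set (Cq := / q * Rpower C q * Rpower c (q * (1 - g) / 2)) in *.
  assert (HCq : 0 < Cq).
  { pose proof (Rinv_0_lt_compat q ltac:(lra)). pose proof (Rpower_pos C q).
    pose proof (Rpower_pos c (q * (1 - g) / 2)).
    unfold Cq; apply Rmult_lt_0_compat; [apply Rmult_lt_0_compat|]; assumption. }
  assert (HB : 0 < B).
  { pose proof (Rinv_0_lt_compat p ltac:(nra)). pose proof (Rpower_pos C p).
    pose proof (Rpower_pos c ((p - p * g) / 2)).
    unfold B; apply Rmult_lt_0_compat; [apply Rmult_lt_0_compat|]; assumption. }
  change (min_max_profile (power_trinomial (a / 2) B (Cq * H) (p * g) (q * g))).
  apply power_trinomial_min_max_profile; try nra.
  exists (hump_peak (a / 2) B (2 - q * g) (p * g - q * g)).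
  split; [apply Rpower_pos|]. rewrite Hpeak. nra.
Qed.
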